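(* Under the locking mechanism described in the context (with partial matches in the expansion lists stored independently), the global schedule of concurrently executing the edge insertion and deletion transactions is streaming consistent.
   Context: A streaming graph is a growing sequence of labelled directed edges with strictly increasing timestamps; under a sliding window, at each time point an edge may arrive and an edge may expire. A (continuous) query $Q$ with a timing order on its edges is evaluated by maintaining expansion lists: $Q$ is decomposed into edge-disjoint timing-connected subqueries $Q^1,\dots,Q^k$; for each $Q^i$ with timing sequence $\epsilon_1,\dots,\epsilon_{m}$ there is a list $L_i=\{L_i^1,\dots,L_i^{m}\}$ whose item $L_i^j$ stores the matches of the subquery $\{\epsilon_1,\dots,\epsilon_j\}$, and a list $L_0=\{L_0^1,\dots,L_0^k\}$ whose item $L_0^i$ stores matches of $Q^1\cup\dots\cup Q^i$; the items are the shared resources. Inserting an incoming edge $\sigma$ ($Ins(\sigma)$) and deleting an expired edge $\sigma'$ ($Del(\sigma')$) are each modeled as a transaction, with timestamp equal to the time the operation happens, and each is executed by its own thread as a sequence of elementary operations READ/INSERT/DELETE on individual items. Locks (shared S or exclusive X) are associated with individual items, and each item has a thread-safe FIFO wait-list of lock requests $\langle$thread id, lock type, item$\rangle$. A single main thread processes the transactions serially in timestamp order: before launching a thread $T$ it appends all of $T$'s lock requests to the ends of the wait-lists of the corresponding items, then launches $T$; launched threads run concurrently. A thread $T$ may access an item only after locking it, and it obtains the lock iff its request is at the head of that item's wait-list and the lock is compatible with the item's current status (the item is free, or both the held lock and requested lock are shared); upon obtaining the lock the request is removed from the wait-list. When $T$ finishes its computation on the item it releases the lock and wakes the thread whose request is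 now at the head of the wait-list. Each thread holds at most one lock at a time. Streaming consistency: at each time point, the answers of $Q$ are the same as those obtained by executing the insertions/deletions of edges serially in the chronological order of their timestamps. *)

From mathcomp Require Import all_boot.
Set Implicit Arguments. Unset Strict Implicit. Unset Printing Implicit Defensive.

Inductive opkind := READ | INSERT | DELETE.
Inductive locktype := SLock | XLock.

Definition lock_of (k : opkind) : locktype :=
  match k with READ => SLock | _ => XLock end.

Section Model.
(* I : the items (shared resources L_i^j, L_0^i); V : contents of an item
   (a set of partial matches); Loc : local (thread-private) state of a
   transaction's thread. *)
Variables (I : eqType) (V Loc : Type).

Record op := Op { op_item : I; op_kind : opkind; op_eff : Loc -> V -> Loc * V }.

(* Transactions are given
   as a list in timestamp order; the thread id of a transaction is its
   position in this list. *)
Record txn := Txn { t_init : Loc; t_ops : seq op }.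

Definition store := I -> V.

Definition upd (s : store) (x : I) (v : V) : store :=
  fun y => if y == x then v else s y.

Definition apply_op (o : op) (st : store * Loc) : store * Loc :=
  let: (s, l) := st in
  let: (l', v') := op_eff o l (s (op_item o)) in
  (if op_kind o is READ then s else upd s (op_item o) v', l').

Definition run_txn (s : store) (t : txn) : store * Loc :=
  foldl (fun st o => apply_op o st) (s, t_init t) (t_ops t).

Fixpoint serial (s : store) (ts : seq txn) : store * seq Loc :=
  match ts with
  | [::] => (s, [::])
  | t :: ts' => let: (s1, l1) := run_txn s t in
                let: (s2, ls) := serial s1 ts' in (s2, l1 :: ls)
  end.

Record config := Config {
  c_store : store;
  c_loc : nat -> option Loc;
  c_pc : nat -> nat;                     (* number of locks obtained so far by
                                            each thread (= index of its next
                                            operation) *)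
  c_hold : nat -> option (I * locktype); (* the (at most one) lock held *)
  c_launched : nat;
  c_wl : I -> seq (nat * nat)            (* FIFO wait-list of each item:
                                            lock requests (thread id, op index);
                                            the lock type and item of a
                                            request are those of that op *)
}.

Variable ts : seq txn.

Definition ops_of (i : nat) : seq op := nth [::] (map t_ops ts) i.

Definition requests (i : nat) (x : I) : seq (nat * nat) :=
  [seq (i, k) | k <- iota 0 (size (ops_of i)) &
                op_item (nth (Op x READ (fun l v => (l, v))) (ops_of i) k) == x].

Definition init_config (s0 : store) : config :=
  Config s0 (fun i => nth None (map (fun t => Some (t_init t)) ts) i)
         (fun _ => 0) (fun _ => None) 0 (fun _ => [::]).

Definition compatible (c : config) (x : I) (lt : locktype) : Prop :=
  forall j lt', c_hold c j = Some (x, lt') -> lt = SLock /\ lt' = SLock.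

Definition fupd {T} (f : nat -> T) (i : nat) (v : T) : nat -> T :=
  fun j => if j == i then v else f j.

Inductive step : config -> config -> Prop :=
  | StepLaunch c :
      c_launched c < size ts ->
      step c (Config (c_store c) (c_loc c) (c_pc c) (c_hold c)
                     (c_launched c).+1
                     (fun x => c_wl c x ++ requests (c_launched c) x))
  | StepAcquire c i o l s' l' :
      i < c_launched c ->
      c_hold c i = None ->
      onth (ops_of i) (c_pc c i) = Some o ->
      ohead (c_wl c (op_item o)) = Some (i, c_pc c i) ->
      compatible c (op_item o) (lock_of (op_kind o)) ->
      c_loc c i = Some l ->
      apply_op o (c_store c, l) = (s', l') ->
      step c (Config s' (fupd (c_loc c) i (Some l'))
                     (fupd (c_pc c) i (c_pc c i).+1)
                     (fupd (c_hold c) i (Some (op_item o, lock_of (op_kind o))))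
                     (c_launched c)
                     (fun x => if x == op_item o then behead (c_wl c x)
                               else c_wl c x))
  | StepRelease c i p :
      c_hold c i = Some p ->
      step c (Config (c_store c) (c_loc c) (c_pc c) (fupd (c_hold c) i None)
                     (c_launched c) (c_wl c)).

Inductive reachable (c : config) : config -> Prop :=
  | reach_refl : reachable c c
  | reach_step c1 c2 : reachable c c1 -> step c1 c2 -> reachable c c2.

Definition finished (c : config) : Prop :=
  c_launched c = size ts /\
  forall i, i < size ts -> c_pc c i = size (ops_of i) /\ c_hold c i = None.

(* streaming consistency of the global schedule: every complete concurrent
   execution yields the same item contents (hence the same answers of Q,
   which are read off the items) and the same thread results as executing
   the transactions serially in timestamp order *)
Definition streaming_consistent : Prop :=
  forall (s0 : store) (c : config),
    reachable (init_config s0) c -> finished c ->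
    (forall x, c_store c x = (serial s0 ts).1 x) /\
    (forall i, i < size ts ->
       c_loc c i = nth None (map Some (serial s0 ts).2) i).
End Model.

(* Since the main thread appends all requests of a transaction before launching
   the next one, the wait-list of an item always lists the unserved requests on
   it in timestamp order, and only its head can be served. Hence the operations
   already performed on an item form a timestamp-order prefix of the operations
   on it, so the item holds the value it has at that point of the serial
   execution. An operation reads and writes only its own item, so the local
   state of every thread is also the serial one, and once all operations are
   performed the configuration is the final serial state. Operations take
   effect atomically when their lock is granted. *)

From mathcomp Require Import all_boot zify.
Set Implicit Arguments. Unset Strict Implicit. Unset Printing Implicit Defensive.

(* [(j, k)] is the [k]-th operation of the [j]-th transaction; the
   lexicographic order [pos_lt] is timestamp order. *)
Definition pos := (nat * nat)%type.

Definition pos_lt (p q : pos) : bool := (p.1 < q.1) || (p.1 == q.1) && (p.2 < q.2).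

Lemma pos_lt_trans : transitive pos_lt.
Proof. by rewrite /pos_lt => ? ? ?; lia. Qed.

Lemma pos_lt_irr : irreflexive pos_lt.
Proof. by rewrite /pos_lt => ?; lia. Qed.

Lemma pos_lt_total p q : p != q -> pos_lt p q || pos_lt q p.
Proof. by case: p q => [a b] [a' b']; rewrite xpair_eqE /pos_lt /=; lia. Qed.

Lemma pos_lt_succ q a b : pos_lt q (a, b.+1) = pos_lt q (a, b) || (q == (a, b)).
Proof. by case: q => [j k]; rewrite xpair_eqE /pos_lt /=; lia. Qed.

Lemma sorted_head_min (T : eqType) (r : rel T) (s : seq T) p q :
  transitive r -> irreflexive r -> sorted r s -> ohead s = Some p -> q \in s ->
  ~~ r q p.
Proof.
move=> r_tr r_irr; case: s => // p' s /= s_sorted [<-].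
rewrite inE => /predU1P [-> | q_s]; first by rewrite r_irr.
have /allP /(_ q q_s) r_pq := order_path_min r_tr s_sorted.
by apply/negP => r_qp; have := r_tr _ _ _ r_pq r_qp; rewrite r_irr.
Qed.

Section StreamingConsistency.
Variables (I : eqType) (V Loc : Type) (ts : seq (txn I V Loc)).

Lemma apply_op_other (o : op I V Loc) st y :
  y != op_item o -> (apply_op o st).1 y = st.1 y.
Proof.
case: st => s l y_o; rewrite /apply_op; case: op_eff => l' v'.
by case: op_kind => //=; rewrite /upd (negbTE y_o).
Qed.

Lemma apply_op_local (o : op I V Loc) (s1 s2 : store I V) l :
  s1 (op_item o) = s2 (op_item o) ->
  (apply_op o (s1, l)).1 (op_item o) = (apply_op o (s2, l)).1 (op_item o) /\
  (apply_op o (s1, l)).2 = (apply_op o (s2, l)).2.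
Proof.
move=> s12; rewrite /apply_op s12; case: op_eff => l' v'.
by case: op_kind => //=; rewrite /upd eqxx.
Qed.

Definition nop (x : I) : op I V Loc := Op x READ (fun l v => (l, v)).

Definition op_on (q : pos) (x : I) : bool :=
  (q.2 < size (ops_of ts q.1)) && (op_item (nth (nop x) (ops_of ts q.1) q.2) == x).

Lemma op_onE q o x :
  onth (ops_of ts q.1) q.2 = Some o -> op_on q x = (op_item o == x).
Proof. by move=> q_o; rewrite /op_on (onth_nth (nop x) _ _ _ q_o) -onthTE q_o. Qed.

Lemma ops_of_onth j t : onth ts j = Some t -> ops_of ts j = t_ops t.
Proof. by move=> j_t; rewrite /ops_of -odflt_onth onth_map j_t. Qed.

Lemma ops_of_default j : size ts <= j -> ops_of ts j = [::].
Proof. by move=> ts_j; rewrite /ops_of nth_default ?size_map. Qed.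

Lemma op_on_txn q x : op_on q x -> q.1 < size ts.
Proof.
rewrite ltnNge; apply: contraTN => /ops_of_default ts_q.
by rewrite /op_on ts_q.
Qed.

Definition positions (n : nat) : seq pos :=
  [seq (j, k) | j <- iota 0 n, k <- iota 0 (size (ops_of ts j))].

Lemma mem_positions n q :
  (q \in positions n) = (q.1 < n) && (q.2 < size (ops_of ts q.1)).
Proof.
case: q => j k; apply/allpairsPdep/idP => [[j' [k' [+ + [-> ->]]]] | /andP[jn kj]].
  by rewrite !mem_iota /=; lia.
by exists j, k; rewrite !mem_iota.
Qed.

Lemma positionsS n :
  positions n.+1 = positions n ++ [seq (n, k) | k <- iota 0 (size (ops_of ts n))].
Proof. by rewrite /positions -addn1 iotaD allpairs_cat /= cats0. Qed.

Lemma sorted_positions n : sorted pos_lt (positions n).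
Proof.
rewrite sorted_pairwise; last exact: pos_lt_trans.
elim: n => [|n IHn] //; rewrite positionsS pairwise_cat IHn.
apply/and3P; split=> //.
  by apply/allrelP => p q; rewrite mem_positions => /andP[pn _] /mapP[k _ ->];
     rewrite /pos_lt pn.
rewrite -sorted_pairwise; last exact: pos_lt_trans.
rewrite sorted_map; apply: sub_sorted (iota_ltn_sorted 0 _) => k k'.
by rewrite /pos_lt /= ltnn eqxx.
Qed.

Definition pending (n : nat) (pc : nat -> nat) (x : I) : seq pos :=
  [seq q <- positions n | op_on q x && (pc q.1 <= q.2)].

Lemma mem_pending n pc x q :
  (q \in pending n pc x) = [&& q.1 < n, op_on q x & pc q.1 <= q.2].
Proof.
rewrite mem_filter mem_positions.
case q_x: (op_on q x); last by rewrite !andbF.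
by move: q_x => /andP[-> _]; rewrite andbT andbC.
Qed.

Lemma sorted_pending n pc x : sorted pos_lt (pending n pc x).
Proof. exact/sorted_filter/sorted_positions/pos_lt_trans. Qed.

Lemma pending_launch n pc x :
  pc n = 0 -> pending n.+1 pc x = pending n pc x ++ requests ts n x.
Proof.
move=> pc_n; rewrite /pending positionsS filter_cat filter_map; congr (_ ++ _).
rewrite /requests; congr map; apply: eq_in_filter => k.
rewrite mem_iota /= pc_n andbT => kn.
by rewrite /op_on kn.
Qed.

Definition performed (pc : nat -> nat) (q : pos) : bool := q.2 < pc q.1.

Definition incr (pc : nat -> nat) (i : nat) : nat -> nat := fupd pc i (pc i).+1.

Lemma performed_incr pc i q :
  performed (incr pc i) q = performed pc q || (q == (i, pc i)).
Proof.
case: q => j k; rewrite /performed /incr /fupd xpair_eqE /=.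
by case: eqP => [-> | _]; rewrite ?andFb ?orbF //; lia.
Qed.

Lemma pending_incr n pc i x :
  pending n (incr pc i) x = rem (i, pc i) (pending n pc x).
Proof.
rewrite rem_filter; last exact/sorted_uniq/sorted_pending/pos_lt_irr/pos_lt_trans.
rewrite -filter_predI; apply: eq_filter => -[j k] /=.
by rewrite /incr /fupd xpair_eqE; case: eqP => [-> | _]; case: (op_on _ x) => //=; lia.
Qed.

Definition cut (pc : nat -> nat) (x : I) (p : pos) : Prop :=
  forall q, op_on q x -> pos_lt q p = performed pc q.

Lemma serial_cat s (a b : seq (txn I V Loc)) :
  serial s (a ++ b) =
  ((serial (serial s a).1 b).1, (serial s a).2 ++ (serial (serial s a).1 b).2).
Proof.
elim: a s => [|t a IHa] s /=; first by case: serial.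
case: run_txn => s1 l1; rewrite IHa; case: (serial s1 a) => s2 ls /=.
by case: serial.
Qed.

Lemma size_serial s (a : seq (txn I V Loc)) : size (serial s a).2 = size a.
Proof.
elim: a s => [|t a IHa] s //=; case: run_txn => s1 l1.
by have := IHa s1; case: serial => s2 ls /= ->.
Qed.

Variable s0 : store I V.

Definition store_before (a : nat) : store I V := (serial s0 (take a ts)).1.

Definition run_prefix (t : txn I V Loc) (a b : nat) : store I V * Loc :=
  foldl (fun st o => apply_op o st) (store_before a, t_init t) (take b (t_ops t)).

Definition store_at (p : pos) : store I V :=
  if onth ts p.1 is Some t then (run_prefix t p.1 p.2).1 else store_before p.1.

Definition loc_at (p : pos) : option Loc :=
  omap (fun t => (run_prefix t p.1 p.2).2) (onth ts p.1).

Lemma store_before_succ a t :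
  onth ts a = Some t -> store_before a.+1 = (run_txn (store_before a) t).1.
Proof.
move=> a_t; have a_ts : a < size ts by rewrite -onthTE a_t.
rewrite /store_before (take_nth t a_ts) (onth_nth t _ _ _ a_t) -cats1 serial_cat /=.
by case: run_txn.
Qed.

Lemma store_before_end a : size ts <= a -> store_before a = (serial s0 ts).1.
Proof. by move=> ts_a; rewrite /store_before take_oversize. Qed.

Lemma store_at_start a : store_at (a, 0) = store_before a.
Proof. by rewrite /store_at; case: onth => //= t; rewrite /run_prefix take0. Qed.

Lemma store_at_end a b : size (ops_of ts a) <= b -> store_at (a, b) = store_before a.+1.
Proof.
rewrite /store_at /=; case a_t: (onth ts a) => [t|].
  rewrite (ops_of_onth a_t) => ops_b.
  by rewrite /run_prefix take_oversize // (store_before_succ a_t).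
have ts_a : size ts <= a by rewrite -onthNE a_t.
by rewrite !store_before_end // (leq_trans ts_a).
Qed.

Lemma run_prefix_succ t a b o :
  onth (t_ops t) b = Some o -> run_prefix t a b.+1 = apply_op o (run_prefix t a b).
Proof.
move=> b_o; have b_t : b < size (t_ops t) by rewrite -onthTE b_o.
by rewrite /run_prefix (take_nth o b_t) (onth_nth o _ _ _ b_o) foldl_rcons.
Qed.

Lemma store_at_succ_other a b x :
  ~~ op_on (a, b) x -> store_at (a, b.+1) x = store_at (a, b) x.
Proof.
rewrite /store_at /=; case a_t: (onth ts a) => [t|] // not_on.
case: (ltnP b (size (t_ops t))) => [b_t | t_b]; last first.
  by rewrite /run_prefix !take_oversize // (leq_trans t_b).
have [o b_o] : exists o, onth (t_ops t) b = Some o.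
  by case b_o: onth => [o|]; [exists o | move: b_t; rewrite -onthTE b_o].
rewrite (run_prefix_succ a b_o) apply_op_other //.
by rewrite eq_sym -(@op_onE (a, b)) // (ops_of_onth a_t).
Qed.

Lemma store_at_skip a b b' x :
  b <= b' -> (forall k, b <= k < b' -> ~~ op_on (a, k) x) ->
  store_at (a, b) x = store_at (a, b') x.
Proof.
move=> /subnKC <-; elim: (b' - b) => [|n IHn] skip; first by rewrite addn0.
rewrite addnS store_at_succ_other; last by apply: skip; lia.
by apply: IHn => k k_n; apply: skip; lia.
Qed.

Lemma store_before_skip a a' x :
  a <= a' -> (forall q, a <= q.1 < a' -> ~~ op_on q x) ->
  store_before a x = store_before a' x.
Proof.
move=> /subnKC <-; elim: (a' - a) => [|n IHn] skip; first by rewrite addn0.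
rewrite IHn => [|q q_n]; last by apply: skip; lia.
rewrite addnS -store_at_start (@store_at_skip _ 0 (size (ops_of ts (a + n)))) //.
  by rewrite store_at_end.
by move=> k _; apply: skip => /=; lia.
Qed.

Lemma store_at_stable x p q :
  ~~ pos_lt q p -> (forall r, op_on r x -> ~~ pos_lt r p -> ~~ pos_lt r q) ->
  store_at p x = store_at q x.
Proof.
case: p q => [a b] [a' b']; rewrite /pos_lt /= => p_q skip.
have skip' r : ~~ pos_lt r (a, b) -> pos_lt r (a', b') -> ~~ op_on r x.
  by move=> r_p r_q; apply: contraL r_q => /skip; apply.
have [eq_a | a_a'] := eqVneq a a'.
  subst a'; apply: store_at_skip => [|k k_b]; first lia.
  by apply: skip'; rewrite /pos_lt /=; lia.
have -> : store_at (a, b) x = store_before a.+1 x.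
  rewrite -(@store_at_end a (maxn b (size (ops_of ts a)))) ?leq_maxr //.
  apply: store_at_skip => [|k k_a]; first exact: leq_maxl.
  by apply: skip'; rewrite /pos_lt /=; lia.
have -> : store_before a.+1 x = store_before a' x.
  apply: store_before_skip => [|r r_a]; first lia.
  by apply: skip'; rewrite /pos_lt /=; lia.
rewrite -store_at_start; apply: store_at_skip => // k k_b.
by apply: skip'; rewrite /pos_lt /=; lia.
Qed.

Lemma store_at_cut pc x p q : cut pc x p -> cut pc x q -> store_at p x = store_at q x.
Proof.
move=> cut_p cut_q; have [q_p | p_q] := boolP (pos_lt q p).
  symmetry; apply: store_at_stable => [|r r_x]; last by rewrite cut_p // cut_q.
  by apply/negP => /(pos_lt_trans q_p); rewrite pos_lt_irr.
by apply: store_at_stable => // r r_x; rewrite cut_p // cut_q.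
Qed.

Record invariant (c : config I V Loc) : Prop := {
  launched_le : c_launched c <= size ts;
  pc_unlaunched : forall j, c_launched c <= j -> c_pc c j = 0;
  loc_serial : forall j, c_loc c j = loc_at (j, c_pc c j);
  wl_pending : forall x, c_wl c x = pending (c_launched c) (c_pc c) x;
  performed_prefix : forall x p q, op_on p x -> op_on q x ->
    performed (c_pc c) p -> ~~ performed (c_pc c) q -> pos_lt p q;
  store_serial : forall x p, cut (c_pc c) x p -> c_store c x = store_at p x }.

Lemma invariant_init : invariant (init_config ts s0).
Proof.
split=> //= [j | x p cut_p].
  have -> : loc_at (j, 0) = onth (map (@t_init I V Loc) ts) j.
    by rewrite onth_map /loc_at; case: onth => //= t; rewrite /run_prefix take0.
  by rewrite onthE -map_comp.
have cut0 : cut (fun=> 0) x (0, 0) by move=> q _; rewrite /pos_lt /performed /=; lia.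
by rewrite -(store_at_cut cut0 cut_p) store_at_start /store_before take0.
Qed.

Lemma invariant_launch c :
  invariant c -> c_launched c < size ts ->
  invariant (Config (c_store c) (c_loc c) (c_pc c) (c_hold c) (c_launched c).+1
                    (fun x => c_wl c x ++ requests ts (c_launched c) x)).
Proof.
case=> _ pc0 loc_c wl_c prefix_c store_c n_ts; split=> //= [j n_j | x].
  by apply: pc0; lia.
by rewrite wl_c pending_launch // pc0.
Qed.

Lemma invariant_hold c h :
  invariant c ->
  invariant (Config (c_store c) (c_loc c) (c_pc c) h (c_launched c) (c_wl c)).
Proof. by case. Qed.

Section Acquire.
Variables (c : config I V Loc) (i : nat) (o : op I V Loc).
Variables (l l' : Loc) (s' : store I V).
Hypotheses (inv_c : invariant c) (i_n : i < c_launched c)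
  (i_o : onth (ops_of ts i) (c_pc c i) = Some o)
  (head_i : ohead (c_wl c (op_item o)) = Some (i, c_pc c i))
  (l_i : c_loc c i = Some l) (apply_o : apply_op o (c_store c, l) = (s', l')).

Local Notation x := (op_item o).
Local Notation k := (c_pc c i).
Local Notation pc' := (incr (c_pc c) i).

Lemma acquire_on y : op_on (i, k) y = (x == y).
Proof. exact: op_onE. Qed.

Lemma acquire_cut : cut (c_pc c) x (i, k).
Proof.
move=> q q_x; apply/idP/idP => [q_i | q_done].
  apply: contraT => q_undone.
  have q_pending : q \in pending (c_launched c) (c_pc c) x.
    by rewrite mem_pending q_x; move: q_i q_undone; rewrite /pos_lt /performed /=; lia.
  have := sorted_head_min pos_lt_trans pos_lt_irr (sorted_pending _ _ _) _ q_pending.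
  by rewrite -(wl_pending inv_c) => /(_ _ head_i) /negP.
apply: (performed_prefix inv_c q_x _ q_done); first by rewrite acquire_on.
by rewrite /performed ltnn.
Qed.

Lemma acquire_cut_succ : cut pc' x (i, k.+1).
Proof. by move=> q q_x; rewrite pos_lt_succ performed_incr acquire_cut. Qed.

Lemma acquire_cut_other y p : y != x -> cut pc' y p -> cut (c_pc c) y p.
Proof.
move=> y_x cut_p q q_y; rewrite cut_p // performed_incr.
case: eqP => [q_i | _]; rewrite ?orbF //.
by move: q_y; rewrite q_i acquire_on eq_sym (negbTE y_x).
Qed.

Lemma acquire_serial :
  s' x = store_at (i, k.+1) x /\ Some l' = loc_at (i, k.+1).
Proof.
case i_t: (onth ts i) => [t|]; last first.
  by move: i_o; rewrite ops_of_default ?onth0n // -onthNE i_t.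
case run_k: (run_prefix t i k) => [sk lk].
have l_lk : l = lk.
  by move: (loc_serial inv_c i); rewrite l_i /loc_at /= i_t /= run_k => -[].
have store_x : c_store c x = sk x.
  by rewrite (store_serial inv_c acquire_cut) /store_at /= i_t run_k.
have [same_x same_l] := apply_op_local l store_x.
have run_succ : run_prefix t i k.+1 = apply_op o (sk, l).
  by rewrite (run_prefix_succ i (o := o)) ?run_k ?l_lk // -(ops_of_onth i_t).
by rewrite /store_at /loc_at /= i_t /= run_succ -same_x -same_l apply_o.
Qed.

Lemma invariant_acquire (h : nat -> option (I * locktype)) :
  invariant (Config s' (fupd (c_loc c) i (Some l')) pc' h (c_launched c)
                    (fun y => if y == x then behead (c_wl c y) else c_wl c y)).
Proof.
have [s'_x l'_serial] := acquire_serial.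
split=> /= [|j n_j|j|y|y p q p_y q_y|y p cut_p].
- exact: launched_le inv_c.
- by rewrite /incr /fupd; case: eqP => [j_i | _]; [lia | apply: pc_unlaunched].
- by rewrite /incr /fupd; case: eqP => [-> | _]; last exact: loc_serial.
- rewrite pending_incr -(wl_pending inv_c); case: eqP => [-> | /eqP y_x].
    by case: (c_wl c x) head_i => //= p s [->]; rewrite eqxx.
  rewrite rem_id // (wl_pending inv_c) mem_pending acquire_on.
  by rewrite eq_sym (negbTE y_x) andbF.
- rewrite !performed_incr negb_or => /orP[p_done | /eqP p_i] /andP[q_undone q_i].
    exact: (performed_prefix inv_c p_y q_y).
  move: p_y q_y; rewrite p_i acquire_on => /eqP <- q_x.
  by have := pos_lt_total q_i; rewrite acquire_cut // (negbTE q_undone).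
- have [y_x | y_x] := eqVneq y x.
    by subst y; rewrite s'_x (store_at_cut acquire_cut_succ cut_p).
  rewrite -(store_serial inv_c (acquire_cut_other y_x cut_p)).
  by rewrite -[s']/((s', l').1) -apply_o apply_op_other.
Qed.

End Acquire.

Lemma invariant_step c c' : invariant c -> step ts c c' -> invariant c'.
Proof.
move=> inv_c step_c; case: step_c inv_c
  => [c0 n_ts | c0 i o l s' l' i_n _ i_o head_i _ l_i apply_o | c0 i p _] inv_c.
- exact: invariant_launch.
- exact: (invariant_acquire inv_c i_n i_o head_i l_i apply_o).
- exact: invariant_hold.
Qed.

Lemma invariant_reachable c : reachable ts (init_config ts s0) c -> invariant c.
Proof.
by elim=> [|c1 c2 _ inv_c1 /(invariant_step inv_c1)]; first exact: invariant_init.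
Qed.

Lemma serial_loc_nth i t :
  onth ts i = Some t -> onth (serial s0 ts).2 i = Some (run_txn (store_before i) t).2.
Proof.
move=> i_t; have i_ts : i < size ts by rewrite -onthTE i_t.
rewrite -[in serial s0 ts](cat_take_drop i ts) (drop_nth t i_ts) (onth_nth t _ _ _ i_t).
rewrite serial_cat onth_cat size_serial size_take i_ts ltnn subnn -/(store_before i) /=.
by case: run_txn => s1 l1; case: serial.
Qed.

Lemma finished_store c x :
  invariant c -> finished ts c -> c_store c x = (serial s0 ts).1 x.
Proof.
move=> inv_c [_ fin_c]; rewrite (@store_serial _ inv_c x (size ts, 0)).
  by rewrite store_at_start store_before_end.
move=> q q_x; have q_ts := op_on_txn q_x.
by rewrite /pos_lt /performed q_ts (fin_c _ q_ts).1; case/andP: q_x.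
Qed.

Lemma finished_loc c i :
  invariant c -> finished ts c -> i < size ts ->
  c_loc c i = nth None (map Some (serial s0 ts).2) i.
Proof.
move=> inv_c [_ fin_c] i_ts; rewrite (loc_serial inv_c) (fin_c _ i_ts).1 -onthE.
case i_t: (onth ts i) => [t|]; last by move: i_ts; rewrite -onthTE i_t.
rewrite (serial_loc_nth i_t) /loc_at /= i_t /=.
by rewrite (ops_of_onth i_t) /run_prefix take_size.
Qed.

End StreamingConsistency.

Theorem theorem4 (I : eqType) (V Loc : Type) (ts : seq (txn I V Loc)) :
  streaming_consistent ts.
Proof.
move=> s0 c reach_c fin_c; have inv_c := invariant_reachable reach_c.
by split=> [x | i]; [exact: finished_store | exact: finished_loc].
Qed.
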